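(* Let $r_1 \ge 2$ and $x_1 \ge 1$ be integers, let $d = x_1 + r_1 - 1$, and let $\mathbf{q} \in \mathbb{Z}^d$ be the vector whose first $x_1$ entries equal $r_1$ and whose last $r_1-1$ entries equal $1 + r_1 x_1$. Let $\Delta_{(1,\mathbf{q})} = \mathrm{conv}\{\mathbf{e}_1,\ldots,\mathbf{e}_d,-\mathbf{q}\} \subset \mathbb{R}^d$. For $\mathbf{t} = (t_1,\ldots,t_d) \in \mathbb{R}^d$ define \[ \lambda_k(\mathbf{t}) = \begin{cases} \sum_{j \ne k} t_j - x_1 r_1 t_k, & 1 \le k \le x_1,\\ \sum_{j\ne k} t_j - (r_1-1) t_k, & x_1+1 \le k \le d,\\ \sum_{j=1}^d t_j, & k = d+1,\end{cases} \] where the sums over $j$ range over $1 \le j \le d$. Then the inequalities $\lambda_k(\mathbf{t}) \le 1$ for $1 \le k \le d+1$ form an irredundant $\mathcal{H}$-description of $\Delta_{(1,\mathbf{q})}$.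
   Context: $\mathbf{e}_i$ is the $i$-th standard basis vector of $\mathbb{R}^d$. *)

From HB Require Import structures.
From mathcomp Require Import all_boot all_order all_algebra.
From mathcomp Require Import reals.
Set Implicit Arguments. Unset Strict Implicit. Unset Printing Implicit Defensive.
Import Order.TTheory GRing.Theory Num.Theory.
Local Open Scope ring_scope.

Definition dimq (r1 x1 : nat) : nat := (x1 + r1 - 1)%N.

Definition in_conv (R : realType) (I : finType) (n : nat)
    (P : I -> 'rV[R]_n) (t : 'rV[R]_n) : Prop :=
  exists w : I -> R, (forall i, 0 <= w i) /\ \sum_i w i = 1 /\
                     t = \sum_i w i *: P i.

Definition qvec (R : realType) (r1 x1 : nat) : 'rV[R]_(dimq r1 x1) :=
  \row_(j < dimq r1 x1) (if (j < x1)%N then r1%:R else (1 + r1 * x1)%:R).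

Definition vertq (R : realType) (r1 x1 : nat) (v : option 'I_(dimq r1 x1))
    : 'rV[R]_(dimq r1 x1) :=
  match v with
  | Some j => delta_mx 0 j
  | None => - qvec R r1 x1
  end.

(* the d+1 linear forms; Some k (k : 'I_d, 0-based) is lambda_{k+1},
   None is lambda_{d+1} *)
Definition lam (R : realType) (r1 x1 : nat) (k : option 'I_(dimq r1 x1))
    (t : 'rV[R]_(dimq r1 x1)) : R :=
  match k with
  | Some k => \sum_(j < dimq r1 x1 | j != k) t 0 j
              - (if (k < x1)%N then (x1 * r1)%:R else (r1%:R - 1)) * t 0 k
  | None => \sum_(j < dimq r1 x1) t 0 j
  end.
Arguments qvec R r1 x1 : clear implicits.
Arguments vertq R r1 x1 v : clear implicits.
Arguments lam R r1 x1 k t : clear implicits.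

From mathcomp Require Import all_boot all_order all_algebra.
From mathcomp Require Import reals.
From mathcomp Require Import ring lra zify.
Set Implicit Arguments. Unset Strict Implicit. Unset Printing Implicit Defensive.
Import Order.TTheory GRing.Theory Num.Theory.
Local Open Scope ring_scope.

(* For any q
   with positive entries, writing s(t) = t_1 + ... + t_d and M = 1 + s(q), the
   facet opposite e_k lies on s(t) - (M / q_k) t_k = 1 (it contains the other
   e_j and -q) and the facet opposite -q lies on s(t) = 1.  A point satisfying
   all d + 1 inequalities is the convex combination of the vertices with the
   explicit coefficients u = (1 - s(t)) / M at -q and t_j + q_j u at e_j.  If w
   is a vertex and v another one, the point 2v - w violates the inequality of
   the facet opposite w and no other.  For the given q, M = r1 (1 + r1 x1), so
   M / q_k - 1 is x1 r1 or r1 - 1 and the forms are the lambda_k. *)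

Lemma big_option (V : nmodType) (I : finType) (F : option I -> V) :
  \sum_i F i = F None + \sum_j F (Some j).
Proof.
rewrite (bigD1 None) //= (reindex_omap Some id) => [|[]//].
by congr (_ + _); apply: eq_bigl => j; rewrite eqxx.
Qed.

Section EntrySum.
Variables (R : pzRingType) (n : nat).

Definition entry_sum (t : 'rV[R]_n) : R := \sum_j t 0 j.

Lemma entry_sumD (t u : 'rV[R]_n) : entry_sum (t + u) = entry_sum t + entry_sum u.
Proof. by rewrite /entry_sum -big_split; apply: eq_bigr => j _; rewrite mxE. Qed.

Lemma entry_sumZ a (t : 'rV[R]_n) : entry_sum (a *: t) = a * entry_sum t.
Proof. by rewrite /entry_sum mulr_sumr; apply: eq_bigr => j _; rewrite mxE. Qed.

Lemma entry_sumN (t : 'rV[R]_n) : entry_sum (- t) = - entry_sum t.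
Proof. by rewrite -scaleN1r entry_sumZ mulN1r. Qed.

Lemma entry_sum_delta (j : 'I_n) : entry_sum (delta_mx 0 j) = 1.
Proof.
rewrite /entry_sum (bigD1 j) //= big1 => [|i /negbTE nij]; last by rewrite mxE nij.
by rewrite mxE !eqxx addr0.
Qed.

End EntrySum.

Section SimplexFacets.
Variables (R : realFieldType) (n : nat) (q : 'rV[R]_n).

Definition simplex_vertex (v : option 'I_n) : 'rV[R]_n :=
  if v is Some j then delta_mx 0 j else - q.

Definition facet_weight (k : 'I_n) : R := (1 + entry_sum q) / q 0 k.

Definition simplex_form (k : option 'I_n) (t : 'rV[R]_n) : R :=
  if k is Some k then entry_sum t - facet_weight k * t 0 k else entry_sum t.

Definition simplex_coord (t : 'rV[R]_n) (v : option 'I_n) : R :=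
  let u := (1 - entry_sum t) / (1 + entry_sum q) in
  if v is Some j then t 0 j + q 0 j * u else u.

Lemma simplex_formD k (t u : 'rV[R]_n) :
  simplex_form k (t + u) = simplex_form k t + simplex_form k u.
Proof. by case: k => [k|] /=; rewrite entry_sumD // mxE; ring. Qed.

Lemma simplex_formZ k a (t : 'rV[R]_n) :
  simplex_form k (a *: t) = a * simplex_form k t.
Proof. by case: k => [k|] /=; rewrite entry_sumZ // mxE; ring. Qed.

Lemma simplex_formN k (t : 'rV[R]_n) : simplex_form k (- t) = - simplex_form k t.
Proof. by rewrite -scaleN1r simplex_formZ mulN1r. Qed.

Lemma simplex_form_sum (I : finType) k (w : I -> R) (P : I -> 'rV[R]_n) :
  simplex_form k (\sum_i w i *: P i) = \sum_i w i * simplex_form k (P i).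
Proof.
elim/big_rec2: _ => [|i t y _ <-]; last by rewrite simplex_formD simplex_formZ.
by rewrite -(scale0r 0) simplex_formZ mul0r.
Qed.

Hypothesis q_gt0 : forall j, 0 < q 0 j.

Let entry_sum_q_ge0 : 0 <= entry_sum q.
Proof. by apply: sumr_ge0 => j _; apply: ltW. Qed.

Lemma add1_entry_sum_gt0 : 0 < 1 + entry_sum q.
Proof. by rewrite ltr_wpDr. Qed.

Lemma facet_weightM k : facet_weight k * q 0 k = 1 + entry_sum q.
Proof. by rewrite divfK // gt_eqF. Qed.

Lemma facet_weight_gt0 k : 0 < facet_weight k.
Proof. by rewrite divr_gt0 ?add1_entry_sum_gt0. Qed.

Lemma simplex_form_vertex k v :
  v != k -> simplex_form k (simplex_vertex v) = 1.
Proof.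
case: k v => [k|] [j|] //= vk.
- have kj : k != j by apply: contraNneq vk => ->.
  by rewrite entry_sum_delta mxE (negbTE kj) mulr0 subr0.
- by rewrite entry_sumN mxE mulrN opprK (facet_weightM k); ring.
- by rewrite entry_sum_delta.
Qed.

Lemma simplex_form_opposite k : simplex_form k (simplex_vertex k) < 1.
Proof.
case: k => [k|] /=.
  by rewrite entry_sum_delta mxE !eqxx mulr1 ltrBlDr ltrDl facet_weight_gt0.
by rewrite entry_sumN (le_lt_trans _ ltr01) ?oppr_le0.
Qed.

Lemma simplex_form_vertex_le1 k v : simplex_form k (simplex_vertex v) <= 1.
Proof.
have [->|vk] := eqVneq v k; first exact/ltW/simplex_form_opposite.
by rewrite simplex_form_vertex.
Qed.

Lemma simplex_coord_ge0 t :
  (forall k, simplex_form k t <= 1) -> forall v, 0 <= simplex_coord t v.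
Proof.
move=> t_in [j|] /=; last first.
  by rewrite divr_ge0 ?subr_ge0 ?(t_in None) // ltW ?add1_entry_sum_gt0.
rewrite -(pmulr_rge0 _ (facet_weight_gt0 j)) mulrDr mulrA (facet_weightM j).
rewrite [_ * (_ / _)]mulrC divfK; last exact: lt0r_neq0 add1_entry_sum_gt0.
by have := t_in (Some j); rewrite /= addrA subr_ge0 lerBlDr addrC.
Qed.

Lemma simplex_coord_sum t : \sum_v simplex_coord t v = 1.
Proof.
rewrite big_option big_split /= -mulr_suml -/(entry_sum t) -/(entry_sum q).
by field; apply: lt0r_neq0 add1_entry_sum_gt0.
Qed.

Lemma simplex_coord_comb t : \sum_v simplex_coord t v *: simplex_vertex v = t.
Proof.
apply/rowP => j; rewrite summxE big_option /= !mxE (bigD1 j) //= big1.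
  by rewrite !mxE !eqxx mulr1 addr0; ring.
by move=> i ij; rewrite !mxE eq_sym (negbTE ij) mulr0.
Qed.

Lemma simplex_form_beyond_facet k v : v != k ->
  let t := simplex_vertex v + simplex_vertex v - simplex_vertex k in
  (forall k', k' != k -> simplex_form k' t <= 1) /\ 1 < simplex_form k t.
Proof.
move=> vk t; rewrite /t; split => [k' k'k|].
  rewrite !simplex_formD simplex_formN (simplex_form_vertex (v := k)) 1?eq_sym //.
  by have := simplex_form_vertex_le1 k' v; lra.
rewrite !simplex_formD simplex_formN (simplex_form_vertex vk).
by have := simplex_form_opposite k; lra.
Qed.

Lemma simplex_form_irredundant k : (0 < n)%N ->
  exists t, (forall k', k' != k -> simplex_form k' t <= 1) /\ 1 < simplex_form k t.
Proof.
move=> n_gt0.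
have [v vk] : exists v, v != k.
  by case: k => [k|]; [exists None | exists (Some (Ordinal n_gt0))].
by eexists; apply: simplex_form_beyond_facet vk.
Qed.

End SimplexFacets.

Lemma simplex_in_conv (R : realType) n (q : 'rV[R]_n) :
  (forall j, 0 < q 0 j) -> forall t,
  in_conv (simplex_vertex q) t <-> (forall k, simplex_form q k t <= 1).
Proof.
move=> q_gt0 t; split => [[w [w_ge0 [w_sum ->]]] k|t_in].
  rewrite simplex_form_sum -w_sum; apply: ler_sum => v _.
  by rewrite ler_piMr ?simplex_form_vertex_le1.
exists (simplex_coord q t); split; first exact: simplex_coord_ge0.
by split; [apply: simplex_coord_sum | rewrite simplex_coord_comb].
Qed.

Lemma qvec_gt0 (R : realType) r1 x1 : (0 < r1)%N ->
  forall j, 0 < qvec R r1 x1 0 j.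
Proof. by move=> r1_gt0 j; rewrite mxE; case: ifP; rewrite ltr0n. Qed.

Lemma add1_entry_sum_qvec (R : realType) r1 x1 : (0 < r1)%N ->
  1 + entry_sum (qvec R r1 x1) = (r1 * (1 + r1 * x1))%:R.
Proof.
move=> r1_gt0.
have -> : entry_sum (qvec R r1 x1) =
    (\sum_(0 <= j < dimq r1 x1) if (j < x1)%N then r1 else 1 + r1 * x1)%N%:R.
  by rewrite big_mkord natr_sum; apply: eq_bigr => j _; rewrite mxE; case: ifP.
rewrite -(natrD _ 1) (big_cat_nat (n := x1)) //=; last by rewrite /dimq; lia.
rewrite (@eq_big_nat _ _ _ 0 x1 _ (fun=> r1)) => [|j /andP[_ ->]//].
rewrite (@eq_big_nat _ _ _ x1 (dimq r1 x1) _ (fun=> 1 + r1 * x1)%N); last first.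
  by move=> j /andP[+ _]; rewrite leqNgt => /negbTE ->.
by rewrite !sum_nat_const_nat /dimq; congr _%:R; nia.
Qed.

Lemma facet_weight_qvec (R : realType) r1 x1 (k : 'I_(dimq r1 x1)) : (0 < r1)%N ->
  facet_weight (qvec R r1 x1) k =
  1 + (if (k < x1)%N then (x1 * r1)%:R else r1%:R - 1).
Proof.
move=> r1_gt0; rewrite /facet_weight add1_entry_sum_qvec // mxE natrM.
case: ifP => _; last by rewrite mulfK ?pnatr_eq0 // addrC subrK.
by rewrite mulrAC divff ?mul1r ?pnatr_eq0 -?lt0n // natrD mulnC.
Qed.

Lemma lam_simplex_form (R : realType) r1 x1 k (t : 'rV[R]_(dimq r1 x1)) :
  (0 < r1)%N -> lam R r1 x1 k t = simplex_form (qvec R r1 x1) k t.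
Proof.
case: k => [k|] r1_gt0 //=.
rewrite facet_weight_qvec // /entry_sum [in RHS](bigD1 k) //=.
by case: (k < x1)%N; ring.
Qed.

Theorem proposition2p1 (R : realType) (r1 x1 : nat)
    (hr1 : (2 <= r1)%N) (hx1 : (1 <= x1)%N) :
  (* H-description: Delta_(1,q) = { t | lambda_k(t) <= 1 for all k } *)
  (forall t : 'rV[R]_(dimq r1 x1),
     in_conv (vertq R r1 x1) t <-> (forall k, lam R r1 x1 k t <= 1))
  /\
  (* irredundancy: dropping any single inequality enlarges the set *)
  (forall k : option 'I_(dimq r1 x1),
     exists t : 'rV[R]_(dimq r1 x1),
       (forall k', k' != k -> lam R r1 x1 k' t <= 1) /\ 1 < lam R r1 x1 k t).
Proof.
have r1_gt0 : (0 < r1)%N by apply: ltnW.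
have q_gt0 : forall j, 0 < qvec R r1 x1 0 j := qvec_gt0 R r1_gt0.
split=> [t | k].
  apply: iff_trans (simplex_in_conv q_gt0 t) _.
  by split=> t_in k; have := t_in k; rewrite lam_simplex_form.
have d_gt0 : (0 < dimq r1 x1)%N by rewrite /dimq; lia.
have [t [t_in t_out]] := simplex_form_irredundant q_gt0 k d_gt0.
exists t; rewrite lam_simplex_form //; split=> // k' k'k.
by rewrite lam_simplex_form // t_in.
Qed.
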